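(* There exists a compactly quasinilpotent Banach algebra which has no non-zero hypocompact ideals. (For example, $A=V\widehat{\otimes}C[0,1]$, where $V=\ell^1(w)$ with convolution $e_ie_j=e_{i+j}$ for a weight $w=(w_k)_{k\ge1}$ with $w_{k+1}/w_k\to0$, e.g. $w_k=k^{-k}$; this $A$ has no non-zero compact elements.)
   Context: For a bounded subset $M$ of a normed algebra, $\|M\|=\sup_{a\in M}\|a\|$, $M^n=\{a_1\cdots a_n:a_i\in M\}$ and $\rho(M)=\lim_n\|M^n\|^{1/n}$. A Banach algebra $A$ is compactly quasinilpotent if $\rho(M)=0$ for every precompact $M\subseteq A$. An element $a$ of a normed algebra $A$ is compact if the operator $x\mapsto axa$ on $A$ is compact. A normed algebra is hypocompact if every non-zero quotient $A/J$ by a closed ideal $J$ has a non-zero compact element; an ideal is hypocompact if it is hypocompact as a normed algebra. $\widehat\otimes$ is the projective tensor product; $\ell^1(w)$ is the space of sequences $\sum\lambda_ke_k$ with $\sum|\lambda_k|w_k<\infty$. *)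

From HB Require Import structures.
From mathcomp Require Import all_boot all_order all_algebra.
From mathcomp Require Import all_classical all_reals all_analysis.
From mathcomp Require Import complex.
Set Implicit Arguments. Unset Strict Implicit. Unset Printing Implicit Defensive.
Import Order.TTheory GRing.Theory Num.Theory.
Local Open Scope classical_set_scope.
Local Open Scope ring_scope.

Section BanachAlgebras.
Variables (R : realType) (V : lmodType R[i]) (mul : V -> V -> V) (N : V -> R).

Definition is_norm : Prop :=
  [/\ forall v, 0 <= N v,
      forall v, N v = 0 -> v = 0,
      forall (k : R[i]) v, N (k *: v) = ComplexField.Normc.normc k * N v
    & forall u v, N (u + v) <= N u + N v].

Definition is_complete : Prop :=
  forall u : nat -> V,
    (forall e : R, 0 < e -> exists M : nat, forall m n : nat,
        (M <= m)%N -> (M <= n)%N -> N (u m - u n) < e) ->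
    exists l : V, forall e : R, 0 < e -> exists M : nat, forall n : nat,
        (M <= n)%N -> N (u n - l) < e.

Definition is_normed_algebra_mul : Prop :=
  [/\ forall a b c, mul a (mul b c) = mul (mul a b) c,
      (forall a b c, mul (a + b) c = mul a c + mul b c) /\
      (forall a b c, mul a (b + c) = mul a b + mul a c),
      forall (k : R[i]) a b, mul (k *: a) b = k *: mul a b,
      forall (k : R[i]) a b, mul a (k *: b) = k *: mul a b
    & forall a b, N (mul a b) <= N a * N b].

Definition banach_algebra : Prop :=
  [/\ is_norm, is_complete & is_normed_algebra_mul].

Definition totally_bounded_in (p : V -> R) (X S : set V) : Prop :=
  forall e : R, 0 < e -> exists (k : nat) (y : nat -> V),
    (forall i, (i < k)%N -> X (y i)) /\
    forall x, S x -> exists i, (i < k)%N /\ p (x - y i) < e.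

Definition precompact_set (M : set V) : Prop := totally_bounded_in N setT M.

(* setpow M n = M^(n+1) = { a_1 ... a_(n+1) : a_i in M } *)
Fixpoint setpow (M : set V) (n : nat) : set V :=
  match n with
  | 0 => M
  | n'.+1 => [set c | exists a b, [/\ setpow M n' a, M b & c = mul a b]]
  end.

Definition set_norm (M : set V) : R := sup [set N a | a in M].

(* rho(M) = lim_n ||M^n||^(1/n) = 0 *)
Definition jsr_zero (M : set V) : Prop :=
  forall e : R, 0 < e -> exists K : nat, forall n : nat, (K <= n)%N ->
    powR (set_norm (setpow M n)) (n.+1%:R)^-1 < e.

Definition compactly_quasinilpotent : Prop :=
  forall M : set V, precompact_set M -> jsr_zero M.

Definition is_ideal_of (I J : set V) : Prop :=
  [/\ J `<=` I, J 0,
      forall x y, J x -> J y -> J (x + y),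
      forall (k : R[i]) x, J x -> J (k *: x)
    & forall a x, I a -> J x -> J (mul a x) /\ J (mul x a)].

Definition is_ideal (I : set V) : Prop := is_ideal_of setT I.

Definition closed_in (I J : set V) : Prop :=
  forall x, I x ->
    (forall e : R, 0 < e -> exists j, J j /\ N (x - j) < e) -> J x.

Definition qnorm (J : set V) (x : V) : R := inf [set N (x - j) | j in J].

(* a + J is a compact element of the normed algebra I/J:
   the operator  x + J |-> a x a + J  on I/J maps the closed unit ball
   of I/J to a precompact (totally bounded) set *)
Definition compact_elt_quot (I J : set V) (a : V) : Prop :=
  totally_bounded_in (qnorm J) I
    [set mul (mul a x) a | x in [set x | I x /\ qnorm J x <= 1]].

Definition hypocompact (I : set V) : Prop :=
  forall J : set V, is_ideal_of I J -> closed_in I J ->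
    (exists x, I x /\ ~ J x) ->
    exists a, [/\ I a, ~ J a & compact_elt_quot I J a].

End BanachAlgebras.

From HB Require Import structures.
From mathcomp Require Import all_boot all_order all_algebra.
From mathcomp Require Import all_classical all_reals all_analysis.
From mathcomp Require Import complex.
From mathcomp Require Import zify ring.
Import Order.TTheory GRing.Theory Num.Theory.
Import numFieldNormedType.Exports.
Local Open Scope classical_set_scope.
Local Open Scope ring_scope.

(* The example is the algebra A of complex functions a on finite words over
   nat (coefficients of non-commutative series in generators e_0, e_1, ...)
   with a [::] = 0, normed by ||a|| = sup_s |a s| w(|s|) with the weight
   w(n) = 4^(-n^2), and multiplied by word convolution
   (ab)(s) = sum_{s = u ++ v} a(u) b(v).
   - Convolution is associative and bilinear; orders add, and the product of
     the lowest terms is the lowest term of the product (wconv_vanishes,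
     wconv_cat).
   - Since w(k + j) (k + j + 1) 2^k <= w(k) w(j), a left factor of order p
     gives ||ab|| <= ||a|| ||b|| / 2^p (wnormM_vanishes); in particular A is a
     Banach algebra, completeness being inherited coefficientwise from C.
   - An element of M^(n+1), M bounded by B, has norm <= B^(n+1) / 2^C(n+1,2),
     so rho(M) = 0 for every bounded, hence every precompact, M (walg_cqn).
   - If a <> 0 has lowest term a(u), the coefficient of a e_j a a at the word
     u i u u is a(u)^3 [i = j]; so x |-> axa maps a bounded sequence to a
     separated one and a is not compact (walg_not_compact).  Hypocompactness
     of an ideal I, tested on the closed ideal J = {0}, therefore forces
     I = 0.
   The file first collects general facts (normed spaces, word convolution,
   the weight, the complex modulus), then builds A and proves the three
   properties, and derives the theorem from them at the end. *)

Set Implicit Arguments. Unset Strict Implicit. Unset Printing Implicit Defensive.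

Local Notation nc := (@ComplexField.Normc.normc _).

Section NormedSpaceFacts.
Variables (R : realType) (V : lmodType R[i]).

Lemma totally_bounded_bounded (p : V -> R) (X S : set V) :
  (forall v, 0 <= p v) -> (forall u v, p (u + v) <= p u + p v) ->
  totally_bounded_in p X S -> exists2 B, 1 <= B & forall x, S x -> p x <= B.
Proof.
move=> p_ge0 pD /(_ 1 ltr01) [k [y [_ net]]].
exists (\sum_(i < k) p (y i) + 1); first by rewrite lerDr sumr_ge0.
move=> x /net [i [ik hi]]; rewrite -(subrK (y i) x).
apply: le_trans (pD _ _) _; rewrite addrC lerD ?(ltW hi) //.
by rewrite (bigD1 (Ordinal ik)) //= lerDl sumr_ge0.
Qed.

(* A totally bounded set contains no infinite d-separated sequence: two of its
   terms would lie within d/2 of the same point of a finite d/2-net. *)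
Lemma separated_not_totally_bounded (p : V -> R) (X S : set V) (y : nat -> V) (d : R) :
  (forall u v, p (u + v) <= p u + p v) -> (forall v, p (- v) = p v) ->
  0 < d -> (forall i, S (y i)) -> (forall i j, i != j -> d <= p (y i - y j)) ->
  ~ totally_bounded_in p X S.
Proof.
move=> pD pN d0 Sy sep /(_ (d / 2) (divr_gt0 d0 (ltr0Sn _ 1))) [k [z [_ net]]].
have [g hg] := choice (fun i => net (y i) (Sy i)).
pose f (i : 'I_k.+1) : 'I_k := Ordinal (hg i).1.
have [f_inj|/injectivePn [i [j ij fij]]] := boolP (injectiveb f).
  by have := leq_card f (injectiveP _ f_inj); rewrite !card_ord ltnn.
have gij : g i = g j by have := congr1 val fij.
have := sep i j ij; apply/negP; rewrite -ltNge -(subrK (z (g j)) (y i)) -addrA.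
apply: le_lt_trans (pD _ _) _; rewrite (splitr d) ltrD //.
  by rewrite -gij; exact: (hg i).2.
by rewrite -opprB pN; exact: (hg j).2.
Qed.

Lemma zero_ideal_of (mul : V -> V -> V) (I : set V) : I 0 ->
  (forall a b c, mul (a + b) c = mul a c + mul b c) ->
  (forall a b c, mul a (b + c) = mul a b + mul a c) -> is_ideal_of mul I [set 0].
Proof.
move=> I0 mulDl mulDr.
have mul0l b : mul 0 b = 0 by apply: (@addrI _ (mul 0 b)); rewrite -mulDl !addr0.
have mul0r b : mul b 0 = 0 by apply: (@addrI _ (mul b 0)); rewrite -mulDr !addr0.
split=> [_ -> // | // | _ _ -> -> | k _ -> | a _ _ ->].
- by rewrite addr0.
- by rewrite scaler0.
- by rewrite mul0l mul0r.
Qed.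

Lemma zero_closed_in (N : V -> R) (I : set V) :
  (forall v, 0 <= N v) -> (forall v, N v = 0 -> v = 0) -> closed_in N I [set 0].
Proof.
move=> N_ge0 N_eq0 x _ near0; apply: N_eq0; apply/eqP; rewrite eq_le N_ge0 andbT.
apply/ler_addgt0Pr => e e0; have [_ [-> hx]] := near0 e e0.
by rewrite subr0 in hx; rewrite add0r ltW.
Qed.

Lemma qnorm_set0 (N : V -> R) : qnorm N [set 0] = N.
Proof. by apply/funext => v; rewrite /qnorm image_set1 subr0 inf1. Qed.

End NormedSpaceFacts.

Lemma sup_between (R : realType) (S : set R) (B : R) :
  0 <= B -> (forall x, S x -> 0 <= x <= B) -> 0 <= sup S <= B.
Proof.
move=> B0 hS; have [[x Sx]|S0] := pselect (S !=set0); last first.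
  by rewrite (_ : S = set0) ?sup0 ?lexx //; apply/seteqP; split=> // y Sy; apply: S0; exists y.
have ubS : has_ubound S by exists B => y /hS /andP[].
have /andP[x0 _] := hS x Sx; rewrite (le_trans x0 (ub_le_sup ubS Sx)) /=.
by apply: ge_sup; [exists x | move=> y /hS /andP[]].
Qed.

(* The recursive form (peel off the first letter) makes associativity easy. *)
Section WordConvolution.
Variable K : comPzRingType.
Implicit Types (f g h : seq nat -> K) (s : seq nat).

Fixpoint wconv f g s : K :=
  match s with
  | [::] => f [::] * g [::]
  | x :: s' => f [::] * g s + wconv (fun t => f (x :: t)) g s'
  end.

Lemma wconvE f g s :
  wconv f g s = \sum_(k < (size s).+1) f (take k s) * g (drop k s).
Proof.
elim: s f => [|x s IH] f /=; first by rewrite big_ord_recl big_ord0 addr0.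
by rewrite big_ord_recl IH.
Qed.

Lemma wconvDl f1 f2 g s : wconv (fun t => f1 t + f2 t) g s = wconv f1 g s + wconv f2 g s.
Proof. by rewrite !wconvE -big_split; apply: eq_bigr => k _; rewrite mulrDl. Qed.

Lemma wconvDr f g1 g2 s : wconv f (fun t => g1 t + g2 t) s = wconv f g1 s + wconv f g2 s.
Proof. by rewrite !wconvE -big_split; apply: eq_bigr => k _; rewrite mulrDr. Qed.

Lemma wconvZl (a : K) f g s : wconv (fun t => a * f t) g s = a * wconv f g s.
Proof. by rewrite !wconvE mulr_sumr; apply: eq_bigr => k _; rewrite mulrA. Qed.

Lemma wconvZr (a : K) f g s : wconv f (fun t => a * g t) s = a * wconv f g s.
Proof. by rewrite !wconvE mulr_sumr; apply: eq_bigr => k _; rewrite mulrCA. Qed.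

Lemma wconvA f g h s : wconv (wconv f g) h s = wconv f (wconv g h) s.
Proof.
elim: s f g h => [|x s IH] f g h /=; first by rewrite mulrA.
by rewrite wconvDl wconvZl IH mulrDr !mulrA addrA.
Qed.

Definition vanishes_below (p : nat) f := forall s, (size s < p)%N -> f s = 0.

Lemma vanishes_below1 f : f [::] = 0 -> vanishes_below 1 f.
Proof. by move=> f0 s; rewrite ltnS leqn0 size_eq0 => /eqP ->. Qed.

Lemma wconv_vanishes p q f g :
  vanishes_below p f -> vanishes_below q g -> vanishes_below (p + q) (wconv f g).
Proof.
move=> fp gq s hs; rewrite wconvE big1 // => k _.
have ks : (k <= size s)%N by rewrite -ltnS.
have [kp|pk] := ltnP k p; first by rewrite fp ?mul0r // size_take_min; lia.
by rewrite gq ?mulr0 // size_drop; lia.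
Qed.

(* ... and the lowest-order terms multiply: only the factorisation u ++ v with
   |u| = p survives in (f * g)(u ++ v). *)
Lemma wconv_cat p q f g u v : vanishes_below p f -> vanishes_below q g ->
  size u = p -> size v = q -> wconv f g (u ++ v) = f u * g v.
Proof.
move=> fp gq su sv; rewrite wconvE size_cat.
have hp : (p < (size u + size v).+1)%N by rewrite ltnS su leq_addr.
rewrite (bigD1 (Ordinal hp)) //= take_size_cat ?drop_size_cat // big1 ?addr0 //.
move=> k /eqP k_ne_p; have {}k_ne_p : nat_of_ord k <> p by move=> e; apply: k_ne_p; apply: val_inj.
have := ltn_ord k; rewrite ltnS => ks.
have [kp|pk] := ltnP k p; first by rewrite fp ?mul0r // size_take_min size_cat; lia.
by rewrite gq ?mulr0 // size_drop size_cat; lia.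
Qed.

End WordConvolution.

(* The weight w(n) = 4^(-n^2).  It decays so fast that the (n+1)-term sums of
   a convolution are absorbed, with a gain of 2^(-k) for a factor of order k:
   (k + j + 1) 2^k w(k + j) <= w(k) w(j). *)
Definition wden (n : nat) : nat := 4 ^ (n * n).

Lemma wden_gt0 n : (0 < wden n)%N.
Proof. by rewrite expn_gt0. Qed.

Lemma wden_split k j : (0 < k)%N -> (0 < j)%N ->
  (wden k * wden j * ((k + j).+1 * 2 ^ k) <= wden (k + j))%N.
Proof.
move=> k0 j0; rewrite /wden.
have -> : ((k + j) * (k + j) = k * k + j * j + 2 * (k * j))%N by ring.
rewrite [(4 ^ (_ + 2 * _))%N]expnD [(4 ^ (k * k + _))%N]expnD -!mulnA !leq_pmul2l ?expn_gt0 //.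
apply: (@leq_trans (2 ^ (k + j) * 2 ^ k)); first by rewrite leq_mul2r ltn_expl ?orbT.
rewrite -expnD (_ : 4 = 2 ^ 2)%N // -expnM leq_pexp2l //.
have kkj : (k <= k * j)%N by rewrite leq_pmulr.
have jkj : (j <= k * j)%N by rewrite leq_pmull.
lia.
Qed.

Section Weight.
Variable R : realFieldType.

Definition weight (n : nat) : R := (wden n)%:R^-1.

Lemma weight_gt0 n : 0 < weight n.
Proof. by rewrite invr_gt0 ltr0n wden_gt0. Qed.

Lemma weight_le1 n : weight n <= 1.
Proof. by rewrite invf_le1 ?ltr0n ?wden_gt0 // ler1n wden_gt0. Qed.

Lemma weight_split n k : (0 < k)%N -> (k < n)%N ->
  weight n <= weight k * weight (n - k) / (n.+1%:R * (2 ^ k)%:R).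
Proof.
move=> k0 kn; have nk0 : (0 < n - k)%N by rewrite subn_gt0.
have := wden_split k0 nk0; rewrite subnKC ?(ltnW kn) // => wden_ineq.
rewrite /weight -!invfM -!natrM lef_pV2 ?posrE ?ltr0n ?wden_gt0 ?ler_nat //.
by rewrite !muln_gt0 !wden_gt0 expn_gt0.
Qed.

End Weight.

Section ComplexModulus.
Variable R : realType.
Local Notation C := R[i].

Lemma normc_ge0 (x : C) : 0 <= nc x.
Proof. by case: x => a b; rewrite /= sqrtr_ge0. Qed.

Lemma normc_gt0 (x : C) : x != 0 -> 0 < nc x.
Proof.
by move=> x0; rewrite lt_def normc_ge0 andbT; apply: contra x0 => /eqP/ComplexField.Normc.eq0_normc ->.
Qed.

Lemma normc_real (r : R) : nc (r%:C)%C = `|r|.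
Proof. by rewrite /= expr0n /= addr0 sqrtr_sqr. Qed.

Lemma normc_sum m (G : 'I_m -> C) : nc (\sum_(i < m) G i) <= \sum_(i < m) nc (G i).
Proof.
elim: m G => [|m IH] G; first by rewrite !big_ord0 ComplexField.Normc.normc0.
by rewrite !big_ord_recr /=; apply: le_trans (le_normcD _ _) _; rewrite lerD2r IH.
Qed.

Lemma normc_ge_Re (x : C) : `|complex.Re x| <= nc x.
Proof.
case: x => a b /=; rewrite -sqrtr_sqr ler_sqrt ?addr_ge0 ?sqr_ge0 //.
by rewrite lerDl sqr_ge0.
Qed.

Lemma normc_ge_Im (x : C) : `|complex.Im x| <= nc x.
Proof.
case: x => a b /=; rewrite -sqrtr_sqr ler_sqrt ?addr_ge0 ?sqr_ge0 //.
by rewrite lerDr sqr_ge0.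
Qed.

Lemma normc_le_ReIm (x : C) : nc x <= `|complex.Re x| + `|complex.Im x|.
Proof.
case: x => a b /=; rewrite -[X in _ <= X]ger0_norm ?addr_ge0 //.
rewrite -sqrtr_sqr ler_sqrt ?sqr_ge0 // sqrrD !real_normK ?num_real //.
by rewrite -addrA lerD2l lerDr mulrn_wge0 ?mulr_ge0.
Qed.

Lemma real_cauchy_cvg (x : nat -> R) :
  (forall e : R, 0 < e -> exists M : nat, forall m n : nat,
     (M <= m)%N -> (M <= n)%N -> `|x m - x n| < e) ->
  exists l : R, forall e : R, 0 < e -> exists M : nat, forall n : nat,
     (M <= n)%N -> `|x n - l| < e.
Proof.
move=> x_cauchy; have : cvg (x @ \oo).
  apply/cauchy_cvgP; apply: cauchy_exP => e e0.
  have [M hM] := x_cauchy e e0; exists (x M); exists M => // n /= hn.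
  by rewrite /ball /= hM.
move=> /cvgrPdist_lt x_cvg; exists (lim (x @ \oo)) => e e0.
by have [M _ hM] := x_cvg e e0; exists M => n hn; rewrite distrC; exact: hM.
Qed.

Lemma complex_cauchy_cvg (z : nat -> C) :
  (forall e : R, 0 < e -> exists M : nat, forall m n : nat,
     (M <= m)%N -> (M <= n)%N -> nc (z m - z n) < e) ->
  exists l : C, forall e : R, 0 < e -> exists M : nat, forall n : nat,
     (M <= n)%N -> nc (z n - l) < e.
Proof.
move=> z_cauchy.
have ReB (x y : C) : complex.Re (x - y) = complex.Re x - complex.Re y by case: x; case: y.
have ImB (x y : C) : complex.Im (x - y) = complex.Im x - complex.Im y by case: x; case: y.
case: (@real_cauchy_cvg (fun n => complex.Re (z n))) => [e e0|la hla].
  have [M hM] := z_cauchy e e0; exists M => m n hm hn.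
  by rewrite -ReB; apply: le_lt_trans (normc_ge_Re _) (hM _ _ hm hn).
case: (@real_cauchy_cvg (fun n => complex.Im (z n))) => [e e0|lb hlb].
  have [M hM] := z_cauchy e e0; exists M => m n hm hn.
  by rewrite -ImB; apply: le_lt_trans (normc_ge_Im _) (hM _ _ hm hn).
exists (la +i* lb)%C => e e0; have e2 : 0 < e / 2 by rewrite divr_gt0.
have [Ma hMa] := hla _ e2; have [Mb hMb] := hlb _ e2.
exists (maxn Ma Mb) => n hn; apply: le_lt_trans (normc_le_ReIm _) _.
by rewrite ReB ImB (splitr e) ltrD // ?hMa ?hMb //; lia.
Qed.

End ComplexModulus.

(* Think of a as the series sum_s a(s) e_s1 ... e_sn in the free
   non-unital algebra on generators e_0, e_1, ... *)
Section WeightedWordAlgebra.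
Variable R : realType.
Local Notation C := R[i].
Local Notation w := (@weight R).

Definition wbounded (f : seq nat -> C) :=
  exists M : R, forall s, nc (f s) * w (size s) <= M.

Record walg := WAlg {
  coef : seq nat -> C;
  coef_nil : coef [::] = 0;
  coef_bounded : wbounded coef }.

HB.instance Definition _ := gen_eqMixin walg.
HB.instance Definition _ := gen_choiceMixin walg.

Lemma walg_ext (u v : walg) : coef u =1 coef v -> u = v.
Proof.
case: u => f f0 fb; case: v => g g0 gb /= /funext fg; subst g.
by rewrite (Prop_irrelevance f0 g0) (Prop_irrelevance fb gb).
Qed.

Section Operations.
Variables (k : C) (u v : walg).

Lemma wbounded0 : wbounded (fun=> 0).
Proof. by exists 0 => s; rewrite ComplexField.Normc.normc0 mul0r. Qed.

Lemma wboundedD : wbounded (fun s => coef u s + coef v s).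
Proof.
have [[Mu hu] [Mv hv]] := (coef_bounded u, coef_bounded v); exists (Mu + Mv) => s.
apply: le_trans (_ : (nc (coef u s) + nc (coef v s)) * w (size s) <= _).
  by rewrite ler_pM2r ?weight_gt0 // le_normcD.
by rewrite mulrDl lerD.
Qed.

Lemma wboundedN : wbounded (fun s => - coef u s).
Proof. by have [M hM] := coef_bounded u; exists M => s; rewrite normcN. Qed.

Lemma wboundedZ : wbounded (fun s => k * coef u s).
Proof.
have [M hM] := coef_bounded u; exists (nc k * M) => s.
by rewrite ComplexField.Normc.normcM -mulrA ler_wpM2l ?normc_ge0.
Qed.

Lemma wadd_nil : coef u [::] + coef v [::] = 0.
Proof. by rewrite !coef_nil addr0. Qed.
Lemma wopp_nil : - coef u [::] = 0.
Proof. by rewrite coef_nil oppr0. Qed.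
Lemma wscale_nil : k * coef u [::] = 0.
Proof. by rewrite coef_nil mulr0. Qed.

Definition wzero := @WAlg (fun=> 0) erefl wbounded0.
Definition wadd := @WAlg (fun s => coef u s + coef v s) wadd_nil wboundedD.
Definition wopp := @WAlg (fun s => - coef u s) wopp_nil wboundedN.
Definition wscale := @WAlg (fun s => k * coef u s) wscale_nil wboundedZ.

End Operations.

Lemma waddA : associative wadd.
Proof. by move=> u v t; apply: walg_ext => s /=; rewrite addrA. Qed.
Lemma waddC : commutative wadd.
Proof. by move=> u v; apply: walg_ext => s /=; rewrite addrC. Qed.
Lemma wadd0 : left_id wzero wadd.
Proof. by move=> u; apply: walg_ext => s /=; rewrite add0r. Qed.
Lemma waddN : left_inverse wzero wopp wadd.
Proof. by move=> u; apply: walg_ext => s /=; rewrite addNr. Qed.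
HB.instance Definition _ := GRing.isZmodule.Build walg waddA waddC wadd0 waddN.

Lemma wscaleA (a b : C) (v : walg) : wscale a (wscale b v) = wscale (a * b) v.
Proof. by apply: walg_ext => s /=; rewrite mulrA. Qed.
Lemma wscale1 : left_id 1 wscale.
Proof. by move=> v; apply: walg_ext => s /=; rewrite mul1r. Qed.
Lemma wscaleDr : right_distributive wscale +%R.
Proof. by move=> a u v; apply: walg_ext => s /=; rewrite mulrDr. Qed.
Lemma wscaleDl (v : walg) : {morph wscale^~ v : a b / a + b}.
Proof. by move=> a b; apply: walg_ext => s /=; rewrite mulrDl. Qed.
HB.instance Definition _ :=
  GRing.Zmodule_isLmodule.Build C walg wscaleA wscale1 wscaleDr wscaleDl.

Lemma coefD (u v : walg) s : coef (u + v) s = coef u s + coef v s. Proof. by []. Qed.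
Lemma coefB (u v : walg) s : coef (u - v) s = coef u s - coef v s. Proof. by []. Qed.
Lemma coefZ (k : C) (u : walg) s : coef (k *: u) s = k * coef u s. Proof. by []. Qed.

Lemma coef_vanishes1 (u : walg) : vanishes_below 1 (coef u).
Proof. exact/vanishes_below1/coef_nil. Qed.

Definition wnorm (v : walg) : R := sup [set nc (coef v s) * w (size s) | s in setT].

Lemma wnorm_ge (v : walg) s : nc (coef v s) * w (size s) <= wnorm v.
Proof.
apply: ub_le_sup; last by exists s.
by have [M hM] := coef_bounded v; exists M => _ [t _ <-]; exact: hM.
Qed.

Lemma wnorm_le (v : walg) (c : R) :
  (forall s, nc (coef v s) * w (size s) <= c) -> wnorm v <= c.
Proof. by move=> hc; apply: ge_sup => [|_ [t _ <-]]; first by exists (nc (coef v [::]) * w 0), [::]. Qed.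

Lemma wnorm_ge0 (v : walg) : 0 <= wnorm v.
Proof. by apply: le_trans (wnorm_ge v [::]); rewrite mulr_ge0 ?normc_ge0 ?ltW ?weight_gt0. Qed.

Lemma coef_le_wnorm (v : walg) s : nc (coef v s) <= wnorm v / w (size s).
Proof. by rewrite ler_pdivlMr ?weight_gt0 // wnorm_ge. Qed.

Lemma wnorm_eq0 (v : walg) : wnorm v = 0 -> v = 0.
Proof.
move=> v0; apply: walg_ext => s; apply: ComplexField.Normc.eq0_normc.
by apply/eqP; rewrite eq_le normc_ge0 andbT; have := coef_le_wnorm v s; rewrite v0 mul0r.
Qed.

Lemma wnormD (u v : walg) : wnorm (u + v) <= wnorm u + wnorm v.
Proof.
apply: wnorm_le => s; rewrite coefD.
apply: le_trans (_ : (nc (coef u s) + nc (coef v s)) * w (size s) <= _).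
  by rewrite ler_pM2r ?weight_gt0 // le_normcD.
by rewrite mulrDl lerD ?wnorm_ge.
Qed.

Lemma wnormZ (k : C) (v : walg) : wnorm (k *: v) = nc k * wnorm v.
Proof.
apply/eqP; rewrite eq_le; apply/andP; split.
  apply: wnorm_le => s; rewrite coefZ ComplexField.Normc.normcM -mulrA.
  by rewrite ler_wpM2l ?normc_ge0 ?wnorm_ge.
have [->|k0] := eqVneq k 0; first by rewrite ComplexField.Normc.normc0 mul0r wnorm_ge0.
rewrite -ler_pdivlMl ?normc_gt0 //; apply: wnorm_le => s.
have := wnorm_ge (k *: v) s; rewrite coefZ ComplexField.Normc.normcM -mulrA => hs.
by rewrite -(ler_pM2l (normc_gt0 k0)) mulVKf ?gt_eqF ?normc_gt0.
Qed.

Lemma wnormN (v : walg) : wnorm (- v) = wnorm v.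
Proof. by rewrite -scaleN1r wnormZ normcN ComplexField.Normc.normc1 mul1r. Qed.

Lemma wnorm_is_norm : is_norm wnorm.
Proof. by split; [exact: wnorm_ge0 | exact: wnorm_eq0 | exact: wnormZ | exact: wnormD]. Qed.

(* Completeness: a Cauchy sequence converges coefficientwise (C is complete),
   uniformly in the weighted sense; the limit is again bounded. *)
Lemma walg_complete : is_complete wnorm.
Proof.
move=> u u_cauchy.
have pointwise s : exists l : C, forall e : R, 0 < e -> exists M : nat,
    forall n : nat, (M <= n)%N -> nc (coef (u n) s - l) < e.
  apply: complex_cauchy_cvg => e e0.
  have [M hM] := u_cauchy (e * w (size s)) (mulr_gt0 e0 (weight_gt0 _ _)).
  exists M => m n hm hn; rewrite -coefB; apply: le_lt_trans (coef_le_wnorm _ _) _.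
  by rewrite ltr_pdivrMr ?weight_gt0 // hM.
have [L hL] := choice pointwise.
have unif e : 0 < e -> exists M : nat, forall n : nat, (M <= n)%N ->
    forall s, nc (coef (u n) s - L s) * w (size s) <= e.
  move=> e0; have [M hM] := u_cauchy e e0; exists M => n hn s.
  apply/ler_addgt0Pr => d d0; have ws0 := weight_gt0 R (size s).
  have [M' hM'] := hL s (d / w (size s)) (divr_gt0 d0 ws0).
  have near_m : nc (coef (u (maxn n M')) s - L s) < d / w (size s) by apply: hM'; lia.
  have cauchy_m : wnorm (u n - u (maxn n M')) < e by apply: hM => //; lia.
  rewrite -(subrK (coef (u (maxn n M')) s) (coef (u n) s)) -addrA.
  apply: le_trans (_ : (nc (coef (u n) s - coef (u (maxn n M')) s) +
      nc (coef (u (maxn n M')) s - L s)) * w (size s) <= _).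
    by rewrite ler_pM2r // le_normcD.
  rewrite mulrDl lerD // -?coefB; first exact: le_trans (wnorm_ge _ _) (ltW cauchy_m).
  by rewrite -ler_pdivlMr // ltW.
have L0 : L [::] = 0.
  apply: ComplexField.Normc.eq0_normc; apply/eqP; rewrite eq_le normc_ge0 andbT.
  apply/ler_addgt0Pr => d d0; have [M hM] := hL [::] d d0.
  by have := hM M (leqnn _); rewrite coef_nil sub0r normcN add0r => /ltW.
have Lb : wbounded L.
  have [M hM] := unif 1 ltr01; exists (wnorm (u M) + 1) => s.
  have triangle : nc (L s) <= nc (coef (u M) s) + nc (coef (u M) s - L s).
    rewrite -{1}(subKr (coef (u M) s) (L s)); apply: le_trans (le_normcD _ _) _.
    by rewrite normcN.
  apply: le_trans (_ : (nc (coef (u M) s) + nc (coef (u M) s - L s)) * w (size s) <= _).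
    by rewrite ler_pM2r ?weight_gt0.
  by rewrite mulrDl lerD ?wnorm_ge ?(hM M (leqnn _) s).
exists (WAlg L0 Lb) => e e0; have [M hM] := unif (e / 2) (divr_gt0 e0 (ltr0Sn _ 1)).
exists M => n hn; apply: le_lt_trans (_ : wnorm (u n - WAlg L0 Lb) <= e / 2) _.
  by apply: wnorm_le => s; exact: hM.
by rewrite ltr_pdivrMr // ltr_pMr // ltr1n.
Qed.

End WeightedWordAlgebra.

(* The key estimate (wconv_bound): if f has order p >= 1, a
   term f(u) g(v) of (f * g)(s), |s| = n, can only be non-zero when
   p <= k = |u| < n, and then the weight inequality bounds its weighted size
   by A B / ((n + 1) 2^k) <= A B / ((n + 1) 2^p); summing the n + 1 terms
   gives A B / 2^p. *)
Section WordAlgebraProduct.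
Variable R : realType.
Local Notation C := R[i].
Local Notation w := (@weight R).
Local Notation walg := (walg R).
Local Notation wnorm := (@wnorm R).

Lemma wconv_bound p (f g : seq nat -> C) (A B : R) s : (0 < p)%N ->
  vanishes_below p f -> g [::] = 0 ->
  (forall t, nc (f t) * w (size t) <= A) -> (forall t, nc (g t) * w (size t) <= B) ->
  nc (wconv f g s) * w (size s) <= A * B / (2 ^ p)%:R.
Proof.
move=> p0 fp g0 fA gB.
have A0 : 0 <= A by apply: le_trans (fA [::]); rewrite fp // ComplexField.Normc.normc0 mul0r.
have B0 : 0 <= B by apply: le_trans (gB [::]); rewrite g0 ComplexField.Normc.normc0 mul0r.
set n := size s; pose c := A * B / (n.+1%:R * (2 ^ p)%:R).
have c0 : 0 <= c by rewrite !mulr_ge0 // invr_ge0 mulr_ge0.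
rewrite wconvE; apply: le_trans (_ : (\sum_(k < n.+1) nc (f (take k s) * g (drop k s))) * w n <= _).
  by rewrite ler_pM2r ?weight_gt0 // normc_sum.
have sum_c : \sum_(k < n.+1) c = A * B / (2 ^ p)%:R.
  rewrite sumr_const card_ord /c -mulr_natr; field.
  by rewrite pnatr_eq0 expn_eq0 /= paddr_eq0 ?ler0n // oner_eq0.
rewrite mulr_suml -sum_c; apply: ler_sum => k _; rewrite ComplexField.Normc.normcM.
have kn : (k <= n)%N by rewrite -ltnS.
have [kp|pk] := ltnP k p.
  by rewrite fp ?ComplexField.Normc.normc0 ?mul0r // size_take_min; lia.
have [k_lt_n|nk] := ltnP k n; last first.
  by rewrite drop_oversize // g0 ComplexField.Normc.normc0 mulr0 mul0r.
set a := nc (f (take k s)); set b := nc (g (drop k s)).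
have a0 : 0 <= a by exact: normc_ge0.
have b0 : 0 <= b by exact: normc_ge0.
have fk : a * w k <= A by have := fA (take k s); rewrite size_take_min (minn_idPl kn).
have gk : b * w (n - k) <= B by have := gB (drop k s); rewrite size_drop.
pose D : R := n.+1%:R * (2 ^ k)%:R.
apply: le_trans (_ : a * b * (w k * w (n - k) / D) <= _).
  by rewrite ler_wpM2l ?mulr_ge0 // weight_split //; lia.
have -> : a * b * (w k * w (n - k) / D) = (a * w k) * (b * w (n - k)) / D by ring.
apply: le_trans (_ : A * B / D <= _).
  rewrite ler_wpM2r ?invr_ge0 ?mulr_ge0 ?ler0n //.
  exact: ler_pM (mulr_ge0 a0 (ltW (weight_gt0 _ _))) (mulr_ge0 b0 (ltW (weight_gt0 _ _))) fk gk.
rewrite /c ler_wpM2l ?mulr_ge0 // lef_pV2 ?posrE ?mulr_gt0 ?ltr0n ?expn_gt0 //.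
by rewrite ler_pM2l ?ltr0n // ler_nat leq_pexp2l.
Qed.

Section Product.
Variables (u v : walg).

Lemma wmul_nil : wconv (coef u) (coef v) [::] = 0.
Proof. by rewrite /= coef_nil mul0r. Qed.

Lemma wmul_bounded : wbounded (wconv (coef u) (coef v)).
Proof.
exists (wnorm u * wnorm v / (2 ^ 1)%:R) => s.
by apply: wconv_bound => //;
  [exact: coef_vanishes1 | exact: coef_nil | exact: wnorm_ge | exact: wnorm_ge].
Qed.

Definition wmul := WAlg wmul_nil wmul_bounded.

End Product.

Lemma coefM (u v : walg) s : coef (wmul u v) s = wconv (coef u) (coef v) s.
Proof. by []. Qed.

Lemma wmulA (a b c : walg) : wmul a (wmul b c) = wmul (wmul a b) c.
Proof. by apply: walg_ext => s; rewrite !coefM -wconvA. Qed.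
Lemma wmulDl (a b c : walg) : wmul (a + b) c = wmul a c + wmul b c.
Proof. by apply: walg_ext => s; rewrite coefD !coefM -wconvDl. Qed.
Lemma wmulDr (a b c : walg) : wmul a (b + c) = wmul a b + wmul a c.
Proof. by apply: walg_ext => s; rewrite coefD !coefM -wconvDr. Qed.
Lemma wmulZl (k : C) (a b : walg) : wmul (k *: a) b = k *: wmul a b.
Proof. by apply: walg_ext => s; rewrite coefZ !coefM -wconvZl. Qed.
Lemma wmulZr (k : C) (a b : walg) : wmul a (k *: b) = k *: wmul a b.
Proof. by apply: walg_ext => s; rewrite coefZ !coefM -wconvZr. Qed.

Lemma wmul_vanishes p q (u v : walg) : vanishes_below p (coef u) ->
  vanishes_below q (coef v) -> vanishes_below (p + q) (coef (wmul u v)).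
Proof. exact: wconv_vanishes. Qed.

Lemma wnormM_vanishes p (u v : walg) : (0 < p)%N -> vanishes_below p (coef u) ->
  wnorm (wmul u v) <= wnorm u * wnorm v / (2 ^ p)%:R.
Proof.
move=> p0 up; apply: wnorm_le => s; rewrite coefM.
by apply: wconv_bound => //; [exact: coef_nil | exact: wnorm_ge | exact: wnorm_ge].
Qed.

Lemma wnormM (u v : walg) : wnorm (wmul u v) <= wnorm u * wnorm v.
Proof.
apply: le_trans (@wnormM_vanishes 1 u v isT (coef_vanishes1 u)) _.
by rewrite ler_pdivrMr ?ltr0n // ler_peMr ?mulr_ge0 ?wnorm_ge0 // ler1n.
Qed.

Lemma walg_banach : banach_algebra wmul wnorm.
Proof.
split; [exact: wnorm_is_norm | exact: walg_complete | split].
- exact: wmulA.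
- by split; [exact: wmulDl | exact: wmulDr].
- exact: wmulZl.
- exact: wmulZr.
- exact: wnormM.
Qed.

End WordAlgebraProduct.

(* A product of n+1 elements of norm <= B has order
   >= n+1, so by the order-gain estimate its norm is at most
   B^(n+1) / 2^(1 + 2 + ... + n) = B^(n+1) / 2^C(n+1, 2); the n-th root of this
   bound tends to 0. *)
Section Quasinilpotence.
Variable R : realType.
Local Notation walg := (walg R).
Local Notation wnorm := (@wnorm R).
Local Notation wmul := (@wmul R).

Lemma setpow_bound (M : set walg) (B : R) : 1 <= B -> (forall x, M x -> wnorm x <= B) ->
  forall n c, setpow wmul M n c ->
  vanishes_below n.+1 (coef c) /\ wnorm c <= B ^+ n.+1 / (2 ^ 'C(n.+1, 2))%:R.
Proof.
move=> B1 MB; have B0 : 0 <= B by apply: le_trans B1.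
elim=> [|n IH] c /=.
  by move=> Mc; rewrite expr1 bin_small // divr1 MB //; split; first exact: coef_vanishes1.
move=> [a [b [Ma Mb ->]]]; have [a_ord a_norm] := IH a Ma; split.
  by rewrite -addn1; apply: wmul_vanishes a_ord (coef_vanishes1 b).
apply: le_trans (@wnormM_vanishes _ n.+1 a b isT a_ord) _.
have -> : B ^+ n.+2 / (2 ^ 'C(n.+2, 2))%:R =
    B ^+ n.+1 / (2 ^ 'C(n.+1, 2))%:R * B / (2 ^ n.+1)%:R.
  by rewrite binS bin1 expnD natrM [B ^+ n.+2]exprSr invfM; ring.
by rewrite ler_wpM2r ?invr_ge0 ?ler0n // ler_pM ?wnorm_ge0 ?MB.
Qed.

Lemma binom2_ge K n : (2 * K <= n)%N -> (K * n.+1 <= 'C(n.+1, 2))%N.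
Proof. by move=> h; rewrite -leq_double bin2 /= halfK oddM /= andNb subn0 -!mul2n; nia. Qed.

Lemma walg_cqn : compactly_quasinilpotent wmul wnorm.
Proof.
move=> M M_tb e e0.
have [B B1 MB] := totally_bounded_bounded (@wnorm_ge0 R) (@wnormD R) M_tb.
have B0 : 0 < B by apply: lt_le_trans B1.
pose K := Num.bound (B / e).
have BeK : B / e < (2 ^ K)%:R.
  apply: lt_le_trans (archi_boundP _) _; first by rewrite divr_ge0 ?ltW.
  by rewrite ler_nat ltnW // ltn_expl.
pose q := B / (2 ^ K)%:R.
have q0 : 0 <= q by rewrite divr_ge0 ?ltW.
have qe : q < e by rewrite ltr_pdivrMr ?ltr0n ?expn_gt0 // mulrC -ltr_pdivrMr.
exists (2 * K)%N => n nK.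
have Mn_le a : setpow wmul M n a -> wnorm a <= q ^+ n.+1.
  move=> /(setpow_bound B1 MB) [_ /le_trans]; apply.
  rewrite exprMn exprVn -natrX -expnM ler_wpM2l ?exprn_ge0 ?(ltW B0) //.
  by rewrite lef_pV2 ?posrE ?ltr0n ?expn_gt0 // ler_nat leq_pexp2l // binom2_ge.
have /andP[Mn_ge0 Mn_q] : 0 <= set_norm wnorm (setpow wmul M n) <= q ^+ n.+1.
  by apply: sup_between => [|_ [a Ma <-]]; rewrite ?exprn_ge0 ?wnorm_ge0 ?Mn_le.
have r0 : 0 <= (n.+1%:R : R)^-1 by rewrite invr_ge0 ler0n.
apply: le_lt_trans (ge0_ler_powR r0 _ _ Mn_q) _; rewrite ?nnegrE ?exprn_ge0 //.
by rewrite -powR_mulrn // -powRrM mulfV ?pnatr_eq0 // powRr1.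
Qed.

End Quasinilpotence.

(* Let a <> 0 have lowest term a(u) <> 0, |u| = m.  With
   the generators e_i (the indicator of the one-letter word [:: i]), the
   coefficient of a e_j a a at the word u i u u is a(u)^3 [i = j].  Hence the
   images a x_i a of the unit-ball elements x_i = e_i a / ||a|| are pairwise
   at distance >= |a(u)|^3 w(3m+1) / ||a||, so x |-> axa is not compact. *)
Section NoCompactElements.
Variable R : realType.
Local Notation C := R[i].
Local Notation w := (@weight R).
Local Notation walg := (walg R).
Local Notation wnorm := (@wnorm R).
Local Notation wmul := (@wmul R).

Section Generator.
Variable i : nat.

Definition gen_coef (s : seq nat) : C := if s == [:: i] then 1 else 0.

Lemma gen_coef_le1 s : nc (gen_coef s) * w (size s) <= 1.
Proof.
rewrite /gen_coef; case: ifP => _; last by rewrite ComplexField.Normc.normc0 mul0r.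
by rewrite ComplexField.Normc.normc1 mul1r weight_le1.
Qed.

Definition gen : walg := @WAlg R gen_coef erefl (ex_intro _ 1 gen_coef_le1).

Lemma wnorm_gen : wnorm gen <= 1.
Proof. by apply: wnorm_le => s; exact: gen_coef_le1. Qed.

Lemma gen_neq0 : gen <> 0.
Proof.
move/(congr1 (fun v : walg => coef v [:: i])).
by rewrite /= /gen_coef eqxx => /eqP; rewrite oner_eq0.
Qed.

End Generator.

Lemma lowest_term (a : walg) : a <> 0 ->
  exists u, coef a u <> 0 /\ vanishes_below (size u) (coef a).
Proof.
move=> a0; have [s0 as0] : exists s, coef a s <> 0.
  apply: contrapT => a_eq0; apply: a0; apply: walg_ext => s.
  by apply: contrapT => as0; apply: a_eq0; exists s.
pose P m := `[< exists u, size u = m /\ coef a u <> 0 >].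
have [|m /asboolP [u [<- au]] min_m] := @ex_minnP P.
  by exists (size s0); apply/asboolP; exists s0.
exists u; split=> // s su; apply: contrapT => as_ne0.
have /min_m : P (size s) by apply/asboolP; exists s.
by rewrite leqNgt su.
Qed.

Lemma coef_lowest_triple (a : walg) u i j : vanishes_below (size u) (coef a) ->
  coef (wmul (wmul (wmul a (gen j)) a) a) (u ++ [:: i] ++ u ++ u) =
  coef a u * coef (gen j) [:: i] * coef a u * coef a u.
Proof.
move=> a_low; have e1 := coef_vanishes1 (gen j).
have a_e := wmul_vanishes a_low e1.
have a_e_a := wmul_vanishes a_e a_low.
rewrite !catA coefM (wconv_cat a_e_a a_low) ?size_cat //.
by rewrite coefM (wconv_cat a_e a_low) ?size_cat // coefM (wconv_cat a_low e1).
Qed.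

Lemma walg_not_compact (I : set walg) (a : walg) : is_ideal wmul I -> I a -> a <> 0 ->
  ~ compact_elt_quot wmul wnorm I [set 0] a.
Proof.
move=> [_ _ _ I_scale I_mul] Ia a0; rewrite /compact_elt_quot qnorm_set0.
have [u [/eqP au a_low]] := lowest_term a0.
have na : 0 < wnorm a by rewrite lt_def wnorm_ge0 andbT; apply/eqP => /wnorm_eq0.
pose c : C := ((wnorm a)^-1)%:C%C.
have nc_c : nc c = (wnorm a)^-1 by rewrite normc_real ger0_norm // invr_ge0 ltW.
pose x i := c *: wmul (gen i) a.
pose t i := u ++ [:: i] ++ u ++ u.
pose d := nc (c * (coef a u * coef a u * coef a u)) * w (size (t 0%N)).
apply: (@separated_not_totally_bounded _ _ _ _ _ (fun i => wmul (wmul a (x i)) a) d).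
- exact: wnormD.
- exact: wnormN.
- have c_neq0 : c != 0.
    apply/eqP => c0; move: nc_c; rewrite c0 ComplexField.Normc.normc0 => /esym/eqP.
    by rewrite invr_eq0 gt_eqF.
  by rewrite mulr_gt0 ?weight_gt0 // normc_gt0 // !mulf_neq0.
- move=> i; exists (x i) => //; split; first exact/I_scale/(I_mul (gen i) a Logic.I Ia).1.
  rewrite wnormZ nc_c ler_pdivrMl // mulr1.
  by apply: le_trans (wnormM _ _) _; rewrite ger_pMl ?wnorm_gen.
move=> i j ij; have xZ k : wmul (wmul a (x k)) a = c *: wmul (wmul (wmul a (gen k)) a) a.
  by rewrite wmulZr wmulZl wmulA.
apply: le_trans (wnorm_ge _ (t i)); rewrite /d !size_cat ler_pM2r ?weight_gt0 //.
rewrite xZ xZ coefB !coefZ !coef_lowest_triple //= /gen_coef eqxx.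
have -> : ([:: i] == [:: j]) = false by apply/negbTE; apply: contra ij => /eqP [->].
by rewrite mulr1 mulr0 !mul0r mulr0 subr0.
Qed.

Lemma walg_hypocompact_ideal_eq0 (I : set walg) :
  is_ideal wmul I -> hypocompact wmul wnorm I -> forall x, I x -> x = 0.
Proof.
move=> I_ideal I_hc x Ix; apply: contrapT => x0; have [_ I0 _ _ _] := I_ideal.
have [a [Ia a0]] := I_hc [set 0] (zero_ideal_of I0 (@wmulDl R) (@wmulDr R))
  (zero_closed_in (I := I) (@wnorm_ge0 R) (@wnorm_eq0 R)) (ex_intro _ x (conj Ix x0)).
exact: walg_not_compact.
Qed.

End NoCompactElements.

Theorem proposition3p4 (R : realType) :
  exists (V : lmodType R[i]) (mul : V -> V -> V) (N : V -> R),
    [/\ banach_algebra mul N,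
        exists a : V, a <> 0,
        compactly_quasinilpotent mul N
      & forall I : set V, is_ideal mul I -> hypocompact mul N I ->
          forall x, I x -> x = 0].
Proof.
exists (walg R), (@wmul R), (@wnorm R); split.
- exact: walg_banach.
- by exists (gen R 0); exact: gen_neq0.
- exact: walg_cqn.
- exact: walg_hypocompact_ideal_eq0.
Qed.
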